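(* Let $g:\mathbb{R}\to\mathbb{R}$ and suppose that $g$ is not a polynomial on some open interval $I\subset\mathbb{R}$, and that there exists a point of $I$ at which $g$ is infinitely many times differentiable. Let ${\bf x}_1,\ldots,{\bf x}_N$ be distinct points in $\mathbb{R}^d$ (with $N\gg d$), and let $X$ be the $N\times d$ matrix whose $i$-th row is ${\bf x}_i$. Then for any integer $m$ with $d<m\le N$ there exist a $d\times m$ real matrix $W$ and an $m$-dimensional real row vector $b$ such that the $N\times m$ matrix $g(XW+\mathbb{1}b)$ has rank $m$. The same statement holds if $g(t)=\max\{t,0\}$. On the other hand, if $g$ is a polynomial of degree $p$, then for every $d\times m$ matrix $W$ (any $m$) and every $m$-dimensional row vector $b$, the rank of $g(XW+\mathbb{1}b)$ is at most $\binom{p+d}{p}$.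
   Context: $\mathbb{1}$ denotes the $N$-dimensional column vector all of whose entries equal $1$, so $XW+\mathbb{1}b$ is the $N\times m$ matrix whose $(i,j)$ entry is ${\bf x}_i\cdot W_{\cdot j}+b_j$. For a matrix $U$, $g(U)$ denotes the matrix obtained by applying $g$ to every entry of $U$. *)

From HB Require Import structures.
From mathcomp Require Import all_boot all_order all_algebra.
From mathcomp Require Import all_classical all_reals all_analysis.
Set Implicit Arguments. Unset Strict Implicit. Unset Printing Implicit Defensive.
Import Order.TTheory GRing.Theory Num.Theory.
Import numFieldNormedType.Exports.
Local Open Scope ring_scope.

Definition ones (R : realType) (N : nat) : 'cV[R]_N := const_mx 1.

Definition layer (R : realType) (g : R -> R) (N d m : nat)
  (X : 'M[R]_(N, d)) (W : 'M[R]_(d, m)) (b : 'rV[R]_m) : 'M[R]_(N, m) :=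
  map_mx g (X *m W + ones R N *m b).

(* g is infinitely many times differentiable at x0: for every n, the
   derivatives g, g', ..., g^(n-1) are all differentiable on some
   neighbourhood of x0 (so g^(n) genuinely exists near x0). *)
Definition smooth_at (R : realType) (g : R -> R) (x0 : R) : Prop :=
  forall n : nat, exists2 e : R, 0 < e &
    forall y : R, `|y - x0| < e ->
      forall k : nat, (k < n)%N -> derivable (derive1n k g) y 1.

Definition poly_on (R : realType) (g : R -> R) (I : set R) : Prop :=
  exists q : {poly R}, forall x, I x -> g x = q.[x].

Definition open_itv (R : realType) (a b : \bar R) : set R :=
  fun x => (a < x%:E)%E /\ (x%:E < b)%E.

Definition relu (R : realType) (t : R) : R := Num.max t 0.

From HB Require Import structures.
From mathcomp Require Import all_boot all_order all_algebra.
From mathcomp Require Import all_classical all_reals all_analysis.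
From mathcomp Require Import ring lra zify.
Import Order.TTheory GRing.Theory Num.Theory.
Import numFieldNormedType.Exports.

Set Implicit Arguments.
Unset Strict Implicit.
Unset Printing Implicit Defensive.
Local Open Scope ring_scope.

(* Project the distinct points x_i on a generic direction w, so that the
   t_i = x_i . w are distinct reals.  The vectors (g (a t_i + c))_i, for all
   slopes a and offsets c, then span R^N: otherwise some l <> 0 satisfies
   sum_i l_i g (a t_i + c) = 0 for all a, c.  Differentiating k times in a at
   a = 0 gives (sum_i l_i t_i^k) g^(k) = 0 near the point where g is smooth;
   as the t_i are distinct, some moment with k < N is nonzero, so g agrees with
   a polynomial P of degree < k near that point.  P satisfies the relation too,
   and a nontrivial relation propagates the vanishing of g - P from an interval
   to the whole line, so g is a polynomial.  Picking m of the spanning vectors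
   greedily yields W and b.  For g polynomial of degree p, every column of
   g (XW + 1b) lies in the span of the entrywise monomials of degree at most p
   in the columns of X, whose dimension is at most 'C(p + d, p). *)

Section Moments.
Variable F : idomainType.

Lemma sum_horner_moments N (l t : 'I_N -> F) K (Q : {poly F}) :
  (forall k, (k < K)%N -> \sum_i l i * t i ^+ k = 0) -> (size Q <= K)%N ->
  \sum_i l i * Q.[t i] = 0.
Proof.
move=> moments0 szQ.
under eq_bigr => i _ do rewrite horner_coef big_distrr /=.
rewrite exchange_big /= big1 // => k _.
under eq_bigr => i _ do rewrite mulrCA.
by rewrite -big_distrr /= moments0 ?mulr0 // (leq_trans (ltn_ord k)).
Qed.

Lemma moments_eq0 N (l t : 'I_N -> F) : injective t ->
  (forall k, (k < N)%N -> \sum_i l i * t i ^+ k = 0) -> forall i, l i = 0.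
Proof.
move=> t_inj moments0 i.
pose Q := \prod_(j | j != i) ('X - (t j)%:P).
have szQ : (size Q <= N)%N.
  rewrite /Q size_prod => [|j _]; last by rewrite polyXsubC_eq0.
  under eq_bigr do rewrite size_XsubC.
  rewrite sum_nat_const cardC1 card_ord.
  by case: N {l t t_inj moments0 Q} i => [[]|n] /=; lia.
have := sum_horner_moments moments0 szQ.
rewrite (bigD1 i) //= big1 ?addr0 => [/eqP|j ji]; last first.
  by rewrite horner_prod (bigD1 j) //= hornerXsubC subrr mul0r mulr0.
rewrite mulf_eq0 horner_prod prodf_seq_eq0 => /orP[/eqP //|/hasP[j _]].
by rewrite hornerXsubC subr_eq0 => /andP[ji /eqP/t_inj eji]; rewrite eji eqxx in ji.
Qed.

Lemma first_nonzero_moment N (l t : 'I_N -> F) : injective t -> (exists i, l i != 0) ->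
  exists k, [/\ (k < N)%N, \sum_i l i * t i ^+ k != 0 &
                forall j, (j < k)%N -> \sum_i l i * t i ^+ j = 0].
Proof.
move=> t_inj [i0 li0].
pose P k := (k < N)%N && (\sum_i l i * t i ^+ k != 0).
have [|k /andP[lt_kN mk] min_k] := ex_minnP (P := P).
  apply: contrapT => /forallNP moments0; apply: (negP li0); apply/eqP.
  apply: (moments_eq0 t_inj) => k lt_kN.
  by apply/eqP/negPn/negP => mk; apply: (moments0 k); rewrite /P lt_kN.
exists k; split=> // j lt_jk; have lt_jN := ltn_trans lt_jk lt_kN.
apply/eqP; apply: contraTT lt_jk => mj; rewrite -leqNgt; apply: min_k.
by rewrite /P lt_jN.
Qed.

Lemma poly_eq0_of_roots (q : {poly F}) (s : nat -> F) : injective s ->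
  (forall k, root q (s k)) -> q = 0.
Proof.
move=> s_inj roots; apply/eqP; apply: contraT => q_neq0.
have uniq_s : uniq [seq s k | k <- iota 0 (size q)] by rewrite map_inj_uniq ?iota_uniq.
have := max_poly_roots q_neq0 _ uniq_s; rewrite size_map size_iota ltnn; apply.
by apply/allP => _ /mapP[k _ ->].
Qed.

Lemma size_comp_affine_leq (P : {poly F}) (a c : F) :
  (size (P \Po (a *: 'X + c%:P)) <= size P)%N.
Proof.
have [->|P_neq0] := eqVneq P 0; first by rewrite comp_poly0.
apply: leq_trans (size_comp_poly_leq _ _) _.
have szq : ((size (a *: 'X + c%:P)%R).-1 <= 1)%N.
  rewrite -subn1 leq_subLR; apply: leq_trans (size_polyD _ _) _.
  rewrite geq_max (leq_trans (size_scale_leq _ _)) ?size_polyX // size_polyC.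
  by case: (c != 0).
rewrite -[X in (_ <= X)%N](prednK (_ : 0 < size P)%N) ?size_poly_gt0 // ltnS.
by rewrite -[X in (_ <= X)%N]muln1 leq_mul.
Qed.

End Moments.

Section SeparatingDirection.
Variable F : numDomainType.

Lemma exists_separating_direction N d (X : 'M[F]_(N, d)) :
  injective (fun i => row i X) ->
  exists w : 'cV[F]_d, injective (fun i => (X *m w) i 0).
Proof.
move=> X_inj.
pose p (i i' : 'I_N) := rVpoly (row i X - row i' X).
have p_neq0 i i' : i != i' -> p i i' != 0.
  apply: contraNneq => p0; apply/eqP/X_inj/eqP; rewrite -subr_eq0; apply/eqP.
  by apply: (can_inj rVpolyK); rewrite [rVpoly _]p0 linear0.
pose Q := \prod_(ii : 'I_N * 'I_N | ii.1 != ii.2) p ii.1 ii.2.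
have Q_neq0 : Q != 0 by apply/prodf_neq0 => ii /p_neq0.
have [k /negP Qk] : exists k : nat, ~ root Q k%:R.
  apply/existsNP => /(poly_eq0_of_roots (mulrIn (oner_neq0 F))) Q0.
  by rewrite Q0 eqxx in Q_neq0.
pose w : 'cV[F]_d := \col_j k%:R ^+ j.
exists w => i i' /eqP Xw; apply/eqP; apply: contraNT Qk => ii'.
rewrite /root /Q horner_prod (bigD1 (i, i')) //= /p horner_poly.
set S := \sum_(_ < d) _; suff -> : S = (X *m w) i 0 - (X *m w) i' 0.
  by rewrite (eqP Xw) subrr mul0r.
by rewrite /S !mxE -sumrB; apply: eq_bigr => j _; rewrite valK !mxE mulrBl.
Qed.

End SeparatingDirection.

Section FullRankRows.
Variable F : fieldType.

Lemma mxrank_adds_row m n (A : 'M[F]_(m, n)) (v : 'rV_n) :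
  ~~ (v <= A)%MS -> \rank (A + v)%MS = (\rank A).+1.
Proof.
move=> vNA; apply/eqP; rewrite eqn_leq; apply/andP; split.
  apply: leq_trans (mxrank_adds_leqif A v).1 _.
  by rewrite -[X in (_ <= X)%N]addn1 leq_add2l rank_leq_row.
have [le_rk eq_rk] := mxrank_leqif_sup (addsmxSl A v).
by rewrite ltn_neqAle le_rk andbT eq_rk addsmx_sub submx_refl.
Qed.

Lemma exists_full_rank_rows (T : Type) N (f : T -> 'rV[F]_N) :
  (forall u : 'cV_N, (forall x, f x *m u = 0) -> u = 0) ->
  forall k, (k <= N)%N -> exists s : 'I_k -> T, \rank (\matrix_j f (s j)) = k.
Proof.
move=> spanning; elim=> [|k IHk] lt_kN.
  exists (fun i => False_rect T (notF (ltn_ord (i : 'I_0)))).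
  by apply/eqP; rewrite -leqn0 rank_leq_row.
have [s rkA] := IHk (ltnW lt_kN); set A := \matrix_(j < k) f (s j) in rkA.
have [x fxNA] : exists x, ~~ (f x <= A)%MS.
  apply: contrapT => /forallNP fA.
  have coker0 : cokermx A = 0.
    apply/matrixP => i j; suff /colP/(_ i) : col j (cokermx A) = 0 by rewrite !mxE.
    apply: spanning => y.
    have /submxP[D ->] : (f y <= A)%MS by apply/negPn/negP/fA.
    by rewrite colE mulmxA -(mulmxA D) mulmx_coker mulmx0 mul0mx.
  have := mxrank_coker A; rewrite coker0 mxrank0 rkA.
  by move/eqP; rewrite eq_sym subn_eq0 leqNgt lt_kN.
pose s' j := if unlift ord0 j is Some j' then s j' else x.
exists s'; have -> : \matrix_j f (s' j) = col_mx (f x) A.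
  apply/matrixP => i j; rewrite !mxE; case: splitP => i' Ei.
    have -> : i = ord0 by apply/ord_inj; rewrite Ei ord1.
    by rewrite /s' unlift_none ord1.
  have -> : i = lift ord0 i' by apply/ord_inj.
  by rewrite /s' liftK mxE.
by rewrite -(addsmxE (f x) A).1 addsmxC mxrank_adds_row // rkA.
Qed.

End FullRankRows.

Lemma sum_bin_hockey n p : (\sum_(l < p.+1) 'C(p - l + n, p - l) = 'C(p + n.+1, p))%N.
Proof.
elim: p => [|p IHp]; first by rewrite big_ord1 !bin0.
rewrite big_ord_recl subn0 /=.
under eq_bigr => l _ do rewrite /bump /= add1n subSS.
by rewrite IHp [(p.+1 + n.+1)%N]addSn binS addSnnS.
Qed.

Section MonomialSpan.
Variable F : fieldType.

Definition pow_row N (v : 'rV[F]_N) j := map_mx (fun x => x ^+ j) v.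

(* The row space of the entrywise monomials of degree at most p in the
   vectors fs k. *)
Fixpoint monomial_span N n : ('I_n -> 'rV[F]_N) -> nat -> 'M[F]_N :=
  if n is n'.+1 then fun fs p =>
    (\sum_(l < p.+1) monomial_span (fun k => fs (lift ord0 k)) (p - l)
                       *m diag_mx (pow_row (fs ord0) l))%MS
  else fun _ _ => <<const_mx 1 : 'rV_N>>%MS.

Lemma mxrank_monomial_span N n (fs : 'I_n -> 'rV[F]_N) p :
  (\rank (monomial_span fs p) <= 'C(p + n, p))%N.
Proof.
elim: n fs p => [|n IHn] fs p /=; first by rewrite genmxE addn0 binn rank_leq_row.
apply: leq_trans (mxrank_sum_leqif _).1 _; rewrite -sum_bin_hockey leq_sum // => l _.
exact: leq_trans (mxrankM_maxl _ _) (IHn _ _).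
Qed.

Lemma pow_row_affine_sub N n (fs : 'I_n -> 'rV[F]_N) w c j p : (j <= p)%N ->
  (pow_row (\sum_k w k *: fs k + c *: const_mx 1) j <= monomial_span fs p)%MS.
Proof.
elim: n fs w j p => [|n IHn] fs w j p le_jp /=.
  rewrite genmxE big_ord0 add0r (_ : pow_row _ j = c ^+ j *: const_mx 1) ?scalemx_sub //.
  by apply/rowP => i; rewrite !mxE !mulr1.
set u := \sum_k w (lift ord0 k) *: fs (lift ord0 k) + c *: const_mx 1.
have -> : pow_row (\sum_k w k *: fs k + c *: const_mx 1) j =
    \sum_(l < j.+1) (w ord0 ^+ l *+ 'C(j, l)) *:
                      (pow_row u (j - l) *m diag_mx (pow_row (fs ord0) l)).
  apply/rowP => i; rewrite big_ord_recl -addrA summxE !mxE addrC exprDn.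
  apply: eq_bigr => l _; rewrite mxE mul_mx_diag !mxE.
  by rewrite exprMn mulrnAl; congr (_ *+ _); ring.
apply: summx_sub => l _; apply: scalemx_sub.
have lt_lp : (l < p.+1)%N by rewrite ltnS (leq_trans _ le_jp) // -ltnS.
apply: (sumsmx_sup (Ordinal lt_lp)) => //=; apply: submxMr.
by apply: IHn; rewrite leq_sub2r.
Qed.

End MonomialSpan.

Section PolyPrimitive.
Variable F : numFieldType.

Definition poly_prim (p : {poly F}) : {poly F} :=
  \poly_(i < (size p).+1) (if i is j.+1 then p`_j / j.+1%:R else 0).

Lemma poly_primK p : (poly_prim p)^`() = p.
Proof.
apply/polyP => i; rewrite coef_deriv coef_poly; case: ltnP => [_|le_pi].
  by rewrite /= -[_ *+ _]mulr_natr divfK // pnatr_eq0.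
by rewrite mul0rn nth_default.
Qed.

End PolyPrimitive.

Section RealAnalysis.
Variable R : realType.

Lemma is_derive_comp_affine (G : R -> R) (t c a : R) : derivable G (a * t + c) 1 ->
  is_derive a 1 (fun x => G (x * t + c)) (derive1 G (a * t + c) * t).
Proof.
move=> dG; have aff : is_derive a 1 (fun x : R => x * t + c) t.
  by apply: is_derive_eq; rewrite scaler0 add0r addr0; exact: mulr1.
have := @is_derive1_comp _ G (fun x => x * t + c) a _ t (derivableP dG) aff.
by rewrite -derive1E.
Qed.

Lemma is_derive_sum_comp_affine (G : R -> R) N (w t : 'I_N -> R) (c a : R) :
  (forall i, derivable G (a * t i + c) 1) ->
  is_derive a 1 (fun x => \sum_i w i * G (x * t i + c))
    (\sum_i w i * (derive1 G (a * t i + c) * t i)).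
Proof.
move=> dG; rewrite (_ : (fun x => _) = \sum_i (fun x => w i *: G (x * t i + c))).
  apply: is_derive_sum => i.
  by have := is_deriveZ (w i) (is_derive_comp_affine (dG i)); congr is_derive; apply/funext.
by apply/funext => x; rewrite fct_sumE.
Qed.

Lemma is_derive_near_eq0 (f : R -> R) a D :
  (\forall x \near a, f x = 0) -> is_derive a 1 f D -> D = 0.
Proof.
move=> f0 /(near_eq_is_derive f0) fD.
by rewrite -(@derive_val _ _ _ _ _ _ _ fD) derive_cst.
Qed.

Lemma is_derive0_itv_cst (f : R -> R) (a b : R) :
  (forall y, y \in `]a, b[ -> is_derive y 1 f 0) -> {in `]a, b[ &, forall u v, f u = f v}.
Proof.
move=> df0; suff le_cst u v : u \in `]a, b[ -> v \in `]a, b[ -> u <= v -> f u = f v.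
  by move=> u v au av; have [/le_cst|/ltW/le_cst/esym] := leP u v; apply.
rewrite !in_itv /= => /andP[au ub] /andP[av vb] le_uv.
have sub_uv x : x \in `[u, v] -> x \in `]a, b[.
  by rewrite !in_itv /= => /andP[ux xv]; apply/andP; split; lra.
have df0_uv x : x \in `]u, v[ -> is_derive x 1 f 0.
  by rewrite in_itv /= => /andP[ux xv]; apply/df0/sub_uv; rewrite in_itv /= !ltW.
have df_uv : {in `[u, v], forall x, derivable f x 1} by move=> x /sub_uv /df0 [].
have [x _] := MVT_segment le_uv df0_uv (derivable_within_continuous df_uv).
by rewrite mul0r => /eqP; rewrite subr_eq0 => /eqP ->.
Qed.

Lemma derive1n_eq0_poly (a b : R) k (f : R -> R) : a < b ->
  {in `]a, b[, forall y j, (j < k)%N -> derivable (derive1n j f) y 1} ->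
  {in `]a, b[, forall y, derive1n k f y = 0} ->
  exists2 P : {poly R}, (size P <= k)%N & {in `]a, b[, forall y, f y = P.[y]}.
Proof.
move=> lt_ab; elim: k f => [|k IHk] f df dkf0.
  by exists 0; rewrite ?size_poly0 // => y /dkf0; rewrite derive1n0 horner0.
have [P szP fP] : exists2 P : {poly R}, (size P <= k)%N &
    {in `]a, b[, forall y, derive1 f y = P.[y]}.
  apply: IHk => [y ay j lt_jk|y ay]; rewrite -derive1Sn; [exact: df | exact: dkf0].
pose Q := poly_prim P.
have dfQ y : y \in `]a, b[ -> is_derive y 1 (f - horner Q) 0.
  move=> ay; have dfy : derivable f y 1 := df y ay 0%N isT.
  apply: DeriveDef; first exact: derivableB.
  by rewrite deriveB // -!derive1E -derivE poly_primK fP // subrr.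
pose c := (a + b) / 2.
have ac : c \in `]a, b[ by rewrite in_itv /=; apply/andP; split; rewrite /c; lra.
exists (Q + ((f - horner Q) c)%:P).
  apply: leq_trans (size_polyD _ _) _.
  by rewrite geq_max (leq_trans (size_poly _ _)) ?ltnS //= size_polyC; case: (_ != 0).
move=> y ay; rewrite hornerD hornerC -(is_derive0_itv_cst dfQ ay ac) /=.
by rewrite addrC subrK.
Qed.

Lemma moment_derive1n_eq0 (g : R -> R) N (l t : 'I_N -> R) (x0 e : R) : 0 < e ->
  (forall y, `|y - x0| < e -> forall k, (k < N)%N -> derivable (derive1n k g) y 1) ->
  (forall a c, \sum_i l i * g (a * t i + c) = 0) ->
  forall k, (k < N)%N -> forall c, `|c - x0| < e / 2 ->
  (\sum_i l i * t i ^+ k) * derive1n k g c = 0.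
Proof.
move=> e_gt0 dg rel.
pose T := 1 + \sum_i `|t i|; pose r := e / (2 * T).
have T_gt0 : 0 < T by rewrite ltr_pwDl // sumr_ge0.
have r_gt0 : 0 < r by rewrite divr_gt0 // mulr_gt0.
have rT : r * T = e / 2 by rewrite /r; field; rewrite gt_eqF.
have near_x0 c a i : `|c - x0| < e / 2 -> a \in `]-r, r[ -> `|a * t i + c - x0| < e.
  rewrite in_itv /= -ltr_norml => cx0 ar; have tT : `|t i| <= T.
    by rewrite /T (bigD1 i) //= addrCA ler_wpDr // addr_ge0 // sumr_ge0.
  have : `|a * t i| < e / 2.
    rewrite normrM (le_lt_trans (ler_wpM2l (normr_ge0 a) tT)) //.
    by rewrite -rT ltr_pM2r.
  rewrite -addrA; move: (ler_normD (a * t i) (c - x0)); lra.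
have moment_a k : (k < N)%N -> forall c, `|c - x0| < e / 2 -> forall a, a \in `]-r, r[ ->
    \sum_i l i * t i ^+ k * derive1n k g (a * t i + c) = 0.
  elim: k => [|k IHk] lt_kN c cx0 a ar.
    by rewrite -[RHS](rel a c); apply: eq_bigr => i _; rewrite expr0 mulr1.
  have dgk i : derivable (derive1n k g) (a * t i + c) 1.
    by apply: dg (ltnW lt_kN); apply: near_x0.
  have dSk := is_derive_sum_comp_affine (fun i => l i * t i ^+ k) dgk.
  rewrite -[RHS](is_derive_near_eq0 _ dSk).
    by apply: eq_bigr => i _; rewrite derive1nS exprSr; ring.
  near=> x; apply: (IHk (ltnW lt_kN) c cx0 x).
  by near: x; apply: near_in_itvoo.
move=> k lt_kN c cx0; rewrite big_distrl -[RHS](moment_a k lt_kN c cx0 0).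
  by apply: eq_bigr => i _; rewrite mul0r add0r.
by rewrite in_itv /= oppr_lt0 r_gt0.
Unshelve. all: by end_near.
Qed.

Lemma derive1n_horner (p : {poly R}) k : derive1n k (horner p) = horner (p^`(k)).
Proof. by elim: k => [|k IHk]; rewrite ?derivn0 // derive1nS IHk -derivE -derivnS. Qed.

Lemma near_eq_derive1n (f h : R -> R) (y : R) :
  (\forall x \near y, f x = h x) ->
  forall k, \forall x \near y, derive1n k f x = derive1n k h x.
Proof.
move=> fh; elim=> [|k IHk]; first exact: fh.
apply: filterS (nbhs_interior IHk) => x fhk.
by rewrite !derive1nS !derive1E; apply: near_eq_derive.
Qed.

Lemma smooth_at_near_poly (g : R -> R) (p : {poly R}) (x0 : R) :
  (\forall x \near x0, g x = p.[x]) -> smooth_at g x0.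
Proof.
move=> /nbhs_interior /nbhs_ballP[e e_gt0 gp] n; exists e => // y yx0 k _.
have /near_eq_derive1n/(_ k) gpk : \forall x \near y, horner p x = g x.
  by near=> x; apply/esym; near: x; apply: gp; rewrite /ball /= distrC.
by apply: near_eq_derivable gpk _; rewrite derive1n_horner; apply: derivable_horner.
Unshelve. all: by end_near.
Qed.

End RealAnalysis.

Section AffineRelations.
Variable R : realType.

Lemma shift_relation_vanish (h : R -> R) (I : finType) (P : pred I) (w d : I -> R)
    (al be s : R) :
  0 < s -> (forall i, P i -> w i != 0 -> s <= d i < be - al) ->
  (forall y, h y = \sum_(i | P i) w i * h (y - d i)) ->
  {in `]al, be[, forall y, h y = 0} -> {in `]al, +oo[, forall y, h y = 0}.
Proof.
move=> s_gt0 d_bounds hrel h0.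
have h0_n n : {in `]al, be + n%:R * s[, forall y, h y = 0}.
  elim: n => [|n IHn] y; first by rewrite mul0r addr0; apply: h0.
  rewrite in_itv /= => /andP[aly lty].
  have [ltyn|geyn] := ltP y (be + n%:R * s).
    by apply: IHn; rewrite in_itv /= aly ltyn.
  rewrite hrel big1 // => i Pi; have [->|wi] := eqVneq (w i) 0; first by rewrite mul0r.
  have /andP[sd db] := d_bounds i Pi wi.
  have ns_ge0 : 0 <= n%:R * s by rewrite mulr_ge0 // ltW.
  rewrite IHn ?mulr0 // in_itv /=; move: lty; rewrite -natr1 mulrDl mul1r => lty.
  by apply/andP; split; lra.
move=> y; rewrite in_itv /= andbT => aly.
pose n := Num.Def.archi_bound `|(y - be) / s|.
apply: (h0_n n); rewrite in_itv /= aly -ltrBlDl -ltr_pdivrMr //.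
exact: le_lt_trans (ler_norm _) (archi_boundP (normr_ge0 _)).
Qed.

(* With t_j maximal on the support of l, the relation at slope a expresses h y
   through h at the points y - a (t_j - t_i), all shifted to the left by at
   least a * del and by at most (be - al) / 2. *)
Lemma affine_relation_vanish_right (h : R -> R) N (l t : 'I_N -> R) (al be : R) :
  injective t -> (exists i, l i != 0) -> al < be ->
  (forall a c, \sum_i l i * h (a * t i + c) = 0) ->
  {in `]al, be[, forall y, h y = 0} -> {in `]al, +oo[, forall y, h y = 0}.
Proof.
move=> t_inj [i0 li0] lt_ab rel h0.
have [j lj jmax] : exists2 j, l j != 0 & forall i, l i != 0 -> t i <= t j.
  by case: (@arg_maxP _ _ _ i0 (fun i => l i != 0) t li0) => j lj jmax; exists j.
pose D := 1 + \sum_i `|t j - t i|; pose a := (be - al) / (2 * D).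
pose del := \big[Num.min/1]_(i | (l i != 0) && (i != j)) (t j - t i).
have D_gt0 : 0 < D by rewrite ltr_pwDl // sumr_ge0.
have a_gt0 : 0 < a by rewrite divr_gt0 ?subr_gt0 // mulr_gt0.
have aD : a * D = (be - al) / 2 by rewrite /a; field; rewrite gt_eqF.
apply: (@shift_relation_vanish h _ (predC1 j) (fun i => - (l i / l j))
          (fun i => a * (t j - t i)) al be (a * del)) => // [|i ij|y].
- rewrite mulr_gt0 // lt_bigmin // => i /andP[li ij]; rewrite subr_gt0 lt_neqAle jmax //.
  by rewrite andbT; apply: contra ij => /eqP/t_inj ->.
- rewrite oppr_eq0 mulf_eq0 invr_eq0 (negbTE lj) orbF => li.
  rewrite ler_pM2l // bigmin_le_cond ?li //=.
  apply: le_lt_trans (ler_wpM2l (ltW a_gt0) (_ : t j - t i <= D)) _.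
    apply: le_trans (ler_norm _) _; rewrite /D (bigD1 i) //= addrCA ler_wpDr //.
    by rewrite addr_ge0 // sumr_ge0.
  by rewrite aD; lra.
- have := rel a (y - a * t j); rewrite (bigD1 j) //= addrCA subrr addr0.
  move/eqP; rewrite addr_eq0 => /eqP ljh; apply: (mulfI lj); rewrite ljh mulr_sumr -sumrN.
  apply: eq_bigr => i _; rewrite (_ : a * t i + _ = y - a * (t j - t i)); last by ring.
  by field.
Qed.

Lemma affine_relation_vanish (h : R -> R) N (l t : 'I_N -> R) (al be : R) :
  injective t -> (exists i, l i != 0) -> al < be ->
  (forall a c, \sum_i l i * h (a * t i + c) = 0) ->
  {in `]al, be[, forall y, h y = 0} -> forall y, h y = 0.
Proof.
move=> t_inj l_neq0 lt_ab rel h0 y.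
have [aly|geay] := ltP al y.
  by apply: (affine_relation_vanish_right t_inj l_neq0 lt_ab rel h0); rewrite in_itv /= aly.
rewrite -[y]opprK; apply: (@affine_relation_vanish_right (fun x => h (- x)) _ l (- t)
  (- be) (- al)) => //; last by rewrite in_itv /= andbT ltrN2 (le_lt_trans geay).
- by move=> i i' /oppr_inj /t_inj.
- by rewrite ltrN2.
- move=> a c; rewrite -[RHS](rel a (- c)).
  by apply: eq_bigr => i _; rewrite mulrN opprD opprK.
- by move=> x; rewrite in_itv /= ltrNl andbC ltrNr => ax; rewrite h0 // in_itv.
Qed.

Lemma affine_relation_poly (g : R -> R) N (l t : 'I_N -> R) (x0 : R) :
  injective t -> (exists i, l i != 0) -> smooth_at g x0 ->
  (forall a c, \sum_i l i * g (a * t i + c) = 0) ->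
  exists P : {poly R}, forall x, g x = P.[x].
Proof.
move=> t_inj l_neq0 g_smooth rel.
have [e e_gt0 dg] := g_smooth N.
have [k [lt_kN mk_neq0 mj0]] := first_nonzero_moment t_inj l_neq0.
have [|||P szP gP] := @derive1n_eq0_poly R (x0 - e / 2) (x0 + e / 2) k g.
- lra.
- move=> y; rewrite in_itv /= -ltr_distlC distrC => yx0 j lt_jk.
  apply: dg (ltn_trans lt_jk lt_kN); lra.
- move=> y; rewrite in_itv /= -ltr_distlC distrC => yx0.
  apply: (mulfI mk_neq0); rewrite mulr0.
  exact: (moment_derive1n_eq0 e_gt0 dg rel lt_kN yx0).
exists P => x; apply/eqP; rewrite -subr_eq0; apply/eqP.
apply: (@affine_relation_vanish (g - horner P) N l t (x0 - e / 2) (x0 + e / 2)) => //.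
- lra.
- move=> a c; under eq_bigr do rewrite !fctE mulrBr.
  rewrite sumrB rel sub0r; apply/eqP; rewrite oppr_eq0; apply/eqP.
  rewrite -[RHS](sum_horner_moments mj0 (leq_trans (size_comp_affine_leq P a c) szP)).
  by apply: eq_bigr => i _; rewrite horner_comp hornerD hornerZ hornerX hornerC.
- by move=> y yx0; rewrite !fctE gP // subrr.
Qed.

End AffineRelations.

Section Layers.
Variable R : realType.

Lemma relu_smooth : smooth_at (@relu R) 1.
Proof.
apply: (smooth_at_near_poly (p := 'X)); near=> x; rewrite hornerX /relu max_l //.
by apply: ltW; near: x; apply: lt_nbhsr; rewrite ltr01.
Unshelve. all: by end_near.
Qed.

Lemma relu_not_poly : ~ poly_on (@relu R) setT.
Proof.
case=> q relu_q.
have q0 : q = 0.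
  apply: (@poly_eq0_of_roots _ q (fun k => - k.+1%:R)) => [k k' /oppr_inj/eqP|k].
    by rewrite eqr_nat => /eqP [].
  by rewrite /root -relu_q // /relu max_r // oppr_le0.
by have := relu_q 1 I; rewrite q0 horner0 /relu max_l ?ler01 // => /eqP; rewrite oner_eq0.
Qed.

Lemma nonpoly_layer_full_rank N d (X : 'M[R]_(N, d)) (g : R -> R) (I : set R) (x0 : R) :
  injective (fun i => row i X) -> ~ poly_on g I -> smooth_at g x0 ->
  forall m, (m <= N)%N ->
  exists (W : 'M[R]_(d, m)) (b : 'rV[R]_m), \rank (layer g X W b) = m.
Proof.
move=> X_inj g_npoly g_smooth m le_mN.
have [w t_inj] := exists_separating_direction X_inj; set t := (fun i => _) in t_inj.
pose f (ac : R * R) := \row_i g (ac.1 * t i + ac.2).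
have spanning (u : 'cV_N) : (forall ac, f ac *m u = 0) -> u = 0.
  move=> fu0; apply/colP => i; rewrite mxE; apply/eqP; apply: contraT => ui.
  have rel a c : \sum_i u i 0 * g (a * t i + c) = 0.
    have /rowP/(_ 0) := fu0 (a, c); rewrite !mxE => {2}<-.
    by apply: eq_bigr => j _; rewrite mxE mulrC.
  have [P gP] := affine_relation_poly t_inj (ex_intro _ i ui) g_smooth rel.
  by case: g_npoly; exists P => x _.
have [s rk_s] := exists_full_rank_rows spanning le_mN.
exists (w *m \row_j (s j).1), (\row_j (s j).2); rewrite -mxrank_tr -[X in _ = X]rk_s.
congr mxrank; apply/matrixP => j i.
by rewrite /layer mulmxA !mxE !big_ord1 !mxE /t mxE mul1r mulrC.
Qed.

Lemma mxrank_layer_poly N d (X : 'M[R]_(N, d)) (q : {poly R}) m W (b : 'rV_m) :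
  (\rank (layer (horner q) X W b) <= 'C((size q).-1 + d, (size q).-1))%N.
Proof.
pose fs k := (col k X)^T.
rewrite -mxrank_tr; apply: leq_trans (mxrankS _) (mxrank_monomial_span fs _).
apply/row_subP => j.
have -> : row j (layer (horner q) X W b)^T =
    \sum_(k < size q) q`_k *: pow_row (\sum_l W l j *: fs l + b 0 j *: const_mx 1) k.
  apply/rowP => i; rewrite !mxE horner_coef summxE; apply: eq_bigr => k _.
  rewrite !mxE big_ord1 !mxE mul1r summxE mulr1; congr (_ * (_ + _) ^+ _).
  by apply: eq_bigr => l _; rewrite !mxE mulrC.
apply: summx_sub => k _; apply/scalemx_sub/pow_row_affine_sub.
by rewrite -ltnS (leq_trans (ltn_ord k)) // leqSpred.
Qed.

End Layers.

Theorem theorem1 (R : realType) (N d : nat) (X : 'M[R]_(N, d))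
  (Xdistinct : injective (fun i : 'I_N => row i X)) :
  (* non-polynomial g, smooth at some point of the interval *)
  (forall g : R -> R,
     (exists (a b : \bar R),
        ~ poly_on g (open_itv a b) /\
        exists x0 : R, open_itv a b x0 /\ smooth_at g x0) ->
     forall m : nat, (d < m)%N -> (m <= N)%N ->
     exists (W : 'M[R]_(d, m)) (b : 'rV[R]_m), \rank (layer g X W b) = m)
  /\
  (* ReLU *)
  (forall m : nat, (d < m)%N -> (m <= N)%N ->
     exists (W : 'M[R]_(d, m)) (b : 'rV[R]_m), \rank (layer (@relu R) X W b) = m)
  /\
  (* polynomial g of degree p *)
  (forall (g : R -> R) (p : nat),
     (exists q : {poly R}, (size q).-1 = p /\ forall x, g x = q.[x]) ->
     forall (m : nat) (W : 'M[R]_(d, m)) (b : 'rV[R]_m),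
       (\rank (layer g X W b) <= 'C(p + d, p))%N).
Proof.
split; [|split].
- move=> g [a [b [g_npoly [x0 [_ g_smooth]]]]] m _.
  exact: nonpoly_layer_full_rank Xdistinct g_npoly g_smooth m.
- move=> m _.
  exact: nonpoly_layer_full_rank Xdistinct (@relu_not_poly R) (@relu_smooth R) m.
- move=> g p [q [<- gq]] m W b.
  by rewrite (_ : g = horner q) ?mxrank_layer_poly //; apply/funext.
Qed.
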